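(* In the multi-agent combinatorial-actions contract model (described in the context), suppose the reward function $f$ is submodular. Let $\boldsymbol{\alpha}\in\mathbb{R}_{\ge0}^A$ be a contract and let $S\subseteq T$ be subset-stable with respect to $\boldsymbol{\alpha}$, such that $S\cap T_i=\emptyset$ for every agent $i$ with $\alpha_i=0$. Then every pure Nash equilibrium $S^\dagger$ with respect to the contract $2\boldsymbol{\alpha}$ satisfies $f(S^\dagger)\ge\frac12f(S)$.
   Context: Model: principal and agents $A=[n]$; each agent $i$ has a finite action set $T_i$ (pairwise disjoint), $T=\bigsqcup_iT_i$, costs $c_j\ge0$, $c(S_i)=\sum_{j\in S_i}c_j$. Reward $f:2^T\to[0,1]$ monotone, $f(\emptyset)=0$; submodular means $f(S'\cup\{a\})-f(S')\ge f(S\cup\{a\})-f(S)$ for $S'\subseteq S$, $a\notin S$. For a profile $S\subseteq T$ write $S_i=S\cap T_i$, $S_{-i}=S\setminus S_i$. Under a contract $\boldsymbol{\alpha}$ agent $i$'s utility is $\alpha_if(S)-c(S_i)$; $S$ is a pure Nash equilibrium of $\boldsymbol{\alpha}$ if for every $i$ and every $S'_i\subseteq T_i$, $\alpha_if(S_i\sqcup S_{-i})-c(S_i)\ge\alpha_if(S'_i\sqcup S_{-i})-c(S'_i)$. $S$ is subset-stable with respect to $\boldsymbol{\alpha}$ if the same inequality holds for every $i$ and every $S'_i\subseteq S_i$. *)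

From mathcomp Require Import all_boot all_order all_algebra.
Set Implicit Arguments. Unset Strict Implicit. Unset Printing Implicit Defensive.
Import Order.TTheory GRing.Theory Num.Theory.
Local Open Scope ring_scope.

(* Model: agents 'I_n; actions form a finite type T; [own a] is the agent
   owning action a, so T_i = [set a | own a == i] (pairwise disjoint,
   T = disjoint union of the T_i). Profiles are subsets S : {set T}. *)

Section Model.
Variables (R : realFieldType) (n : nat) (T : finType) (own : T -> 'I_n).

Definition Tset (i : 'I_n) : {set T} := [set a | own a == i].
Definition part (S : {set T}) (i : 'I_n) : {set T} := S :&: Tset i.
Definition others (S : {set T}) (i : 'I_n) : {set T} := S :\: Tset i.

Definition cost (c : T -> R) (X : {set T}) : R := \sum_(a in X) c a.

Definition monotone_set_fun (f : {set T} -> R) : Prop :=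
  forall S S' : {set T}, S \subset S' -> f S <= f S'.

Definition submodular (f : {set T} -> R) : Prop :=
  forall (S' S : {set T}) (a : T), S' \subset S -> a \notin S ->
    f (a |: S') - f S' >= f (a |: S) - f S.

Definition utility (alpha : 'I_n -> R) (c : T -> R) (f : {set T} -> R)
  (i : 'I_n) (X : {set T}) : R := alpha i * f X - cost c (part X i).

Definition pure_NE (alpha : 'I_n -> R) (c : T -> R) (f : {set T} -> R)
  (S : {set T}) : Prop :=
  forall (i : 'I_n) (Si' : {set T}), Si' \subset Tset i ->
    alpha i * f (part S i :|: others S i) - cost c (part S i)
      >= alpha i * f (Si' :|: others S i) - cost c Si'.

Definition subset_stable (alpha : 'I_n -> R) (c : T -> R) (f : {set T} -> R)
  (S : {set T}) : Prop :=
  forall (i : 'I_n) (Si' : {set T}), Si' \subset part S i ->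
    alpha i * f (part S i :|: others S i) - cost c (part S i)
      >= alpha i * f (Si' :|: others S i) - cost c Si'.

End Model.

From mathcomp Require Import all_boot all_order all_algebra.
From mathcomp Require Import lra.
Set Implicit Arguments. Unset Strict Implicit. Unset Printing Implicit Defensive.
Import Order.TTheory GRing.Theory Num.Theory.
Local Open Scope ring_scope.

(* Fix an agent i and let D_i = S_i \ Sd.  Deviating to Sd_i u S_i is
   unprofitable in the equilibrium for 2 alpha, and dropping D_i from S is
   unprofitable by subset stability, so c(D_i) is squeezed between
   2 alpha_i (f(Sd u S_i) - f Sd) and alpha_i (f S - f(S \ D_i)).  Summing
   over the agents, submodularity bounds the left sums below by
   2 (f(Sd u S) - f Sd) and the right sums above by f S - f(S \ U D_i) <= f S
   (the D_i are disjoint); monotonicity gives f S <= f(Sd u S). *)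

Lemma setDUK (T : finType) (A B : {set T}) : B \subset A -> A :\: B :|: B = A.
Proof.
move=> sBA; apply/setP => x; rewrite !inE.
by case: (boolP (x \in B)) => [/(subsetP sBA) ->|]; rewrite ?orbT ?orbF.
Qed.

Section SubmodularMarginals.
Variables (R : realFieldType) (T : finType) (f : {set T} -> R).
Hypotheses (f_mono : monotone_set_fun f) (f_subm : submodular f).

Lemma marginal_antitone (X Y Z : {set T}) : X \subset Y ->
  f (Y :|: Z) - f Y <= f (X :|: Z) - f X.
Proof.
move=> sXY; rewrite -[Z]set_enum; elim: (enum Z) => [|a s IH].
  by rewrite set_nil !setU0 !subrr.
rewrite set_cons !(setUCA _ [set a]).
set Zs := [set:: s] in IH *.
have [aYZ | aYZ] := boolP (a \in Y :|: Zs).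
  have f_XZ_le : f (X :|: Zs) <= f (a |: (X :|: Zs)) by apply: f_mono; exact: subsetUr.
  have -> : a |: (Y :|: Zs) = Y :|: Zs by apply/setUidPr; rewrite sub1set.
  lra.
have := f_subm (setSU Zs sXY) aYZ; lra.
Qed.

Lemma marginal_bigcup_le_sum (I : Type) (r : seq I) (X : {set T}) (G : I -> {set T}) :
  f (X :|: \bigcup_(i <- r) G i) - f X <= \sum_(i <- r) (f (X :|: G i) - f X).
Proof.
apply: (big_rec2 (fun U s => f (X :|: U) - f X <= s)) => [|i U s _ IH].
  by rewrite setU0 subrr.
have := marginal_antitone (G i) (subsetUl X U).
rewrite setUA setUAC; lra.
Qed.

Lemma sum_marginal_loss_le (I : finType) (r : seq I) (Y : {set T}) (G : I -> {set T}) :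
  uniq r -> (forall i, G i \subset Y) ->
  (forall i j, i != j -> [disjoint G i & G j]) ->
  \sum_(i <- r) (f Y - f (Y :\: G i)) <= f Y - f (Y :\: \bigcup_(i <- r) G i).
Proof.
move=> + sGY disjG; elim: r => [|i r IH] /=; first by rewrite !big_nil setD0 subrr.
case/andP=> i_notin_r /IH {}IH; rewrite !big_cons.
set U := \bigcup_(j <- r) G j in IH *.
have disjGU : [disjoint G i & U].
  rewrite /U bigcup_seq; apply: bigcup_disjoint => j jr.
  by apply: disjG; apply: contraNneq i_notin_r => ->.
have sGYU : G i \subset Y :\: U by rewrite subsetD sGY.
have := marginal_antitone (G i) (setDS Y (subsetUl (G i) U)).
rewrite [G i :|: U]setUC -setDDl !setDUK //; lra.
Qed.

End SubmodularMarginals.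

Section Profiles.
Variables (n : nat) (T : finType) (own : T -> 'I_n).

Lemma part_others (S : {set T}) i : part own S i :|: others own S i = S.
Proof. exact: setID. Qed.

Lemma bigcup_part (S : {set T}) : \bigcup_i part own S i = S.
Proof.
apply/setP => a; apply/bigcupP/idP => [[i _]|aS]; first by case/setIP.
by exists (own a); rewrite // !inE aS /=.
Qed.

Lemma disjoint_part (A B : {set T}) i j :
  i != j -> [disjoint part own A i & part own B j].
Proof.
move=> ij; rewrite -setI_eq0; apply/eqP/setP => a; rewrite !inE.
by apply/negbTE; apply: contra ij => /andP[/andP[_ /eqP <-] /andP[_ /eqP <-]].
Qed.

Variables (R : realFieldType) (c : T -> R) (f : {set T} -> R).

Lemma cost_setID (A B : {set T}) :
  cost c A = cost c (A :&: B) + cost c (A :\: B).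
Proof. exact: big_setID. Qed.

Lemma cost_setU (A X : {set T}) :
  cost c (A :|: X) = cost c A + cost c (X :\: A).
Proof. by rewrite (cost_setID _ A) setUK setDUl setDv set0U. Qed.

Lemma pure_NE_marginal_le_cost (beta : 'I_n -> R) (Sd X : {set T}) i :
  pure_NE own beta c f Sd -> X \subset Tset own i ->
  beta i * (f (Sd :|: X) - f Sd) <= cost c (X :\: Sd).
Proof.
move=> Sd_NE sXi.
have := Sd_NE i (part own Sd i :|: X); rewrite subUset subsetIr sXi => /(_ isT).
rewrite part_others -setUA [X :|: _]setUC setUA part_others cost_setU.
have -> : X :\: part own Sd i = X :\: Sd.
  have /eqP X_out_i : X :\: Tset own i == set0 by rewrite setD_eq0.
  by rewrite /part setDIr X_out_i setU0.
lra.
Qed.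

Lemma subset_stable_cost_le (alpha : 'I_n -> R) (S Y : {set T}) i :
  subset_stable own alpha c f S ->
  cost c (part own S i :\: Y) <= alpha i * (f S - f (S :\: (part own S i :\: Y))).
Proof.
move=> S_stable; have := S_stable i (part own S i :&: Y) (subsetIl _ _).
rewrite part_others (cost_setID (part own S i) Y).
have -> : part own S i :&: Y :|: others own S i = S :\: (part own S i :\: Y).
  apply/setP => a; rewrite /part /others /Tset !inE.
  by case: (a \in S); case: (a \in Y); case: (own a == i).
lra.
Qed.

Lemma agent_gain_le_loss (alpha : 'I_n -> R) (S Sd : {set T}) i :
  0 <= alpha i -> (alpha i = 0 -> part own S i = set0) ->
  subset_stable own alpha c f S -> pure_NE own (fun j => 2 * alpha j) c f Sd ->
  2 * (f (Sd :|: part own S i) - f Sd) <= f S - f (S :\: (part own S i :\: Sd)).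
Proof.
move=> alpha_ge0 idle S_stable Sd_NE.
have [/idle ->|alpha_neq0] := eqVneq (alpha i) 0.
  by rewrite set0D setD0 setU0 !subrr mulr0.
have alpha_gt0 : 0 < alpha i by rewrite lt0r alpha_neq0.
rewrite -(ler_pM2l alpha_gt0) mulrCA mulrA.
exact: le_trans (pure_NE_marginal_le_cost Sd_NE (subsetIr _ _))
                (subset_stable_cost_le Sd i S_stable).
Qed.

End Profiles.

Theorem lemma2p3 (R : realFieldType) (n : nat) (T : finType) (own : T -> 'I_n)
  (c : T -> R) (f : {set T} -> R) (alpha : 'I_n -> R) (S Sd : {set T}) :
  (forall a, 0 <= c a) ->
  f set0 = 0 ->
  (forall X, 0 <= f X <= 1) ->
  monotone_set_fun f ->
  submodular f ->
  (forall i, 0 <= alpha i) ->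
  subset_stable own alpha c f S ->
  (forall i, alpha i = 0 -> part own S i = set0) ->
  pure_NE own (fun i => 2 * alpha i) c f Sd ->
  f Sd >= f S / 2.
Proof.
move=> _ _ f_bounds f_mono f_subm alpha_ge0 S_stable S_idle Sd_NE.
pose D i := part own S i :\: Sd.
have D_sub i : D i \subset S := subset_trans (subsetDl _ _) (subsetIl _ _).
have D_disj i j : i != j -> [disjoint D i & D j].
  move=> ij; apply: disjointWl (subsetDl _ _) _.
  exact: disjointWr (subsetDl _ _) (disjoint_part own S S ij).
have gain_le_loss : \sum_i 2 * (f (Sd :|: part own S i) - f Sd)
                    <= \sum_i (f S - f (S :\: D i)).
  by apply: ler_sum => i _; exact: agent_gain_le_loss (alpha_ge0 i) (S_idle i) S_stable Sd_NE.
have gain_le := marginal_bigcup_le_sum f_mono f_subm (index_enum 'I_n) Sd (part own S).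
have loss_le := sum_marginal_loss_le f_mono f_subm (index_enum_uniq 'I_n) D_sub D_disj.
have S_le : f S <= f (Sd :|: \bigcup_i part own S i).
  by rewrite bigcup_part; apply: f_mono; exact: subsetUr.
have /andP[rest_ge0 _] := f_bounds (S :\: \bigcup_i D i).
rewrite -mulr_sumr in gain_le_loss.
lra.
Qed.
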